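(* Consider the series $H_{a_1,\dots,a_r}(z)$ for all $r\ge1$ and all tuples $(a_1,\dots,a_r)$ of positive integers none of which is divisible by $3$. These series (for pairwise distinct tuples), together with the constant series $1$, are linearly independent over $(\mathbb Z/3\mathbb Z)[z]$; consequently they are also linearly independent over $(\mathbb Z/3^\gamma\mathbb Z)[z]$ for every positive integer $\gamma$, and over $\mathbb Z[z]$. That is, if $p_0(z)+\sum_{i=1}^N p_i(z)H_{a^{(i)}}(z)=0$ (over the respective coefficient ring) with pairwise distinct such tuples $a^{(i)}$, then all polynomials $p_i$ are zero.
   Context: For positive integers $a_1,\dots,a_r$, $H_{a_1,\dots,a_r}(z)=\sum_{n_1>n_2>\dots>n_r\ge0}z^{a_13^{n_1}+a_23^{n_2}+\dots+a_r3^{n_r}}$. *)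

From HB Require Import structures.
From mathcomp Require Import all_boot all_order all_algebra.
Set Implicit Arguments. Unset Strict Implicit. Unset Printing Implicit Defensive.
Import GRing.Theory.
Local Open Scope ring_scope.

(* Coefficient of z^m in H_a(z) = sum_{n_1 > ... > n_r >= 0} z^{a_1 3^{n_1}+...+a_r 3^{n_r}}:
   the number of strictly decreasing tuples (n_1,...,n_r) with
   a_1 3^{n_1} + ... + a_r 3^{n_r} = m.  Since all a_i >= 1, every such n_i
   satisfies n_i < 3^{n_i} <= m, so n_i ranges over 'I_(m.+1) without loss. *)
Definition Hcoef (a : seq nat) (m : nat) : nat :=
  #|[pred t : (size a).-tuple 'I_m.+1 |
      sorted (fun x y : 'I_m.+1 => (y < x)%N) t &&
      (\sum_(q <- zip a (map val t)) (q.1 * 3 ^ q.2)%N == m)]|.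

Definition Hser (R : nzRingType) (a : seq nat) (m : nat) : R := (Hcoef a m)%:R.

Definition mulps (R : nzRingType) (p : {poly R}) (f : nat -> R) (m : nat) : R :=
  \sum_(j < m.+1) p`_j * f (m - j)%N.

Definition admissible (a : seq nat) : bool :=
  (0 < size a)%N && all (fun x => (0 < x)%N && ~~ (3 %| x)%N) a.

Definition H_lin_indep (R : nzRingType) : Prop :=
  forall (N : nat) (A : 'I_N -> seq nat) (p0 : {poly R}) (p : 'I_N -> {poly R}),
    (forall i, admissible (A i)) ->
    injective A ->
    (forall m : nat, p0`_m + \sum_(i < N) mulps (p i) (Hser R (A i)) m = 0) ->
    p0 = 0 /\ (forall i, p i = 0).

From HB Require Import structures.
From mathcomp Require Import all_boot all_order all_algebra.
From mathcomp Require Import zify.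
Set Implicit Arguments. Unset Strict Implicit. Unset Printing Implicit Defensive.
Import GRing.Theory.

(* The independence holds over every nonzero ring R, which yields the three
   claims at once.  For k < 3 let Lambda_k be the 3-section
   f |-> sum_m f_(3m+k) z^m.  A representation m = sum_i a_i 3^(n_i) by a
   tuple whose entries are prime to 3 has last exponent n_r = 0 exactly when
   3 does not divide m; hence, writing a = (a', x),
     Lambda_k (z^j H_a) = z^j' H_a                 if j = k (mod 3),
     Lambda_k (z^j H_a) = z^j'' H_a' or 0          otherwise,
   the second case being nonzero only if x = k - j (mod 3).
   A linear combination is encoded as a list of atoms c z^j H_a.  By induction
   on the maximal length r of the tuples, a list representing the zero series
   has zero weight on every basis series z^j H_a: the weights of the atoms of
   maximal length are transported by sections (Lambda_(j mod 3) lowers the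
   shift j; iterated Lambda_0 makes all long atoms unshifted, after which one
   Lambda_k with k = x mod 3 strips the last entry x of the target tuple and
   lands in length r - 1). *)

(* ndec a lo n m counts the strictly decreasing exponent tuples
   n > e_1 > ... > e_r >= lo with a_1 3^e_1 + ... + a_r 3^e_r = m. *)
Fixpoint ndec (a : seq nat) (lo n m : nat) : nat :=
  match a with
  | [::] => m == 0
  | x :: a' => \sum_(lo <= e < n) (x * 3 ^ e <= m) * ndec a' lo e (m - x * 3 ^ e)
  end.

Lemma ndec_empty_range a lo n m : a != [::] -> n <= lo -> ndec a lo n m = 0.
Proof. by case: a => //= x a _ le_n_lo; rewrite big_geq. Qed.

Lemma ndec_shift a lo n m : ndec a lo.+1 n.+1 (3 * m) = ndec a lo n m.
Proof.
elim: a lo n m => [|x a IH] lo n m /=; first by rewrite muln_eq0.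
rewrite big_add1 /=; apply: eq_bigr => e _.
by rewrite expnS mulnCA leq_pmul2l // -mulnBr IH.
Qed.

Lemma ndec_ndvd3 a lo n m : ~~ (3 %| m) -> ndec a lo.+1 n m = 0.
Proof.
elim: a lo n m => [|x a IH] lo n m ndvd_m /=; first by case: eqP ndvd_m => // ->.
rewrite big_nat big1 // => e /andP [lo_e _].
case: leqP => le_xm; last by rewrite mul0n.
rewrite IH ?muln0 //; apply: contra ndvd_m => dvd_rest.
rewrite -(subnK le_xm) dvdn_add // dvdn_mull //.
by rewrite -(prednK (leq_ltn_trans (leq0n lo) lo_e)) expnS dvdn_mulr.
Qed.

Lemma ndec_rcons a x lo n m :
  ndec (rcons a x) lo n m = ndec (rcons a x) lo.+1 n m +
     (lo < n) * (x * 3 ^ lo <= m) * ndec a lo.+1 n (m - x * 3 ^ lo).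
Proof.
elim: a n m => [|y a IH] n m /=.
  case: (ltnP lo n) => lo_n; last by rewrite !big_geq // ltnW.
  by rewrite big_ltn // addnC mul1n.
case: (ltnP lo n) => lo_n; last by rewrite !big_geq // ?mul0n ?addn0 // ltnW.
rewrite [LHS]big_ltn // ndec_empty_range //; last by case: (a).
rewrite muln0 add0n mul1n.
rewrite (@eq_big_nat _ _ _ _ _ _ (fun e =>
    (y * 3 ^ e <= m) * ndec (rcons a x) lo.+1 e (m - y * 3 ^ e) +
    (x * 3 ^ lo <= m - y * 3 ^ e) *
      ((y * 3 ^ e <= m) * ndec a lo.+1 e (m - y * 3 ^ e - x * 3 ^ lo)))); last first.
  by move=> e /andP [lo_e _]; rewrite IH lo_e mul1n mulnDr; congr (_ + _); lia.
rewrite big_split /= big_distrr /=; congr (_ + _).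
apply: eq_big_nat => e _; set A := y * 3 ^ e; set B := x * 3 ^ lo.
rewrite -subnDA addnC subnDA.
by case: (leqP A m); case: (leqP B m); case: (leqP B (m - A)); case: (leqP A (m - B));
  rewrite ?mul0n ?muln0 ?mul1n ?muln1 //; lia.
Qed.

(* Exponents e with 3^e > m are useless, so the upper bound can be cut to m+1. *)
Lemma ndec_cut a lo n m : all (fun x => 0 < x) a -> m < n ->
  ndec a lo n m = ndec a lo m.+1 m.
Proof.
move=> a_pos; elim: n => // n IH lt_m_n1.
case: (ltnP m n) => [lt_mn|le_nm]; last by have -> : n = m by lia.
rewrite -IH //; clear IH; case: a a_pos => [|x a] //= /andP [x_pos _].
case: (leqP lo n) => lo_n; last by rewrite !big_geq // ltnW.
rewrite big_nat_recr //= leqNgt.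
suff -> : m < x * 3 ^ n by rewrite mul0n addn0.
apply: (leq_trans lt_mn); apply: (leq_trans (ltnW (ltn_expl n (isT : 1 < 3)))).
by rewrite leq_pmull.
Qed.

Lemma card_tuple_cons (T : finType) k (P : pred (k.+1.-tuple T)) :
  #|P| = \sum_(x : T) #|[pred t : k.-tuple T | P [tuple of x :: t]]|.
Proof.
rewrite -sum1_card.
rewrite (reindex (fun p : T * k.-tuple T => [tuple of p.1 :: p.2])) /=; last first.
  apply: onW_bij; exists (fun t : k.+1.-tuple T => (thead t, [tuple of behead t])).
    by case=> x t /=; congr (_, _); apply: val_inj.
  by move=> t /=; rewrite [RHS]tuple_eta.
rewrite -(pair_big_dep xpredT (fun x (t : k.-tuple T) => P [tuple of x :: t])
                      (fun _ _ => 1%N)) /=.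
by apply: eq_bigr => x _; rewrite sum1_card.
Qed.

Lemma card_dec_tuples a N n m : n <= N ->
  #|[pred t : (size a).-tuple 'I_N | sorted (fun x y : 'I_N => (y < x)%N) t &&
      all (fun e : 'I_N => (e < n)%N) t &&
      ((\sum_(q <- zip a (map val t)) (q.1 * 3 ^ q.2)%N)%R == m)]| = ndec a 0 n m.
Proof.
have gt_trans : transitive (fun x y : 'I_N => (y < x)%N).
  by move=> u v w H1 H2; apply: ltn_trans H2 H1.
elim: a n m => [|x a IH] n m le_nN /=.
  case: eqP => [m0|m_neq0].
    rewrite eq_cardT; first by rewrite -cardT card_tuple expn0.
    by move=> t; rewrite [t]tuple0 inE /= big_nil m0.
  apply: eq_card0 => t; rewrite [t]tuple0 inE /= big_nil.
  by apply/eqP => m0; apply: m_neq0; rewrite -m0.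
rewrite card_tuple_cons (eq_bigr (fun e : 'I_N =>
    (e < n) * ((x * 3 ^ e <= m) * ndec a 0 e (m - x * 3 ^ e)))); last first.
  move=> e _; case: (ltnP e n) => e_n; last first.
    by rewrite mul0n; apply: eq_card0 => t; rewrite inE /= ltnNge e_n /= andbF.
  case: (leqP (x * 3 ^ e) m) => le_xm; last first.
    rewrite mul0n muln0; apply: eq_card0 => t; rewrite inE /= big_cons /=.
    apply/negP => /andP [_ /eqP sum_m].
    by move: le_xm; rewrite -sum_m ltnNge leq_addr.
  rewrite !mul1n -(IH e (m - x * 3 ^ e) (ltnW (ltn_ord e))).
  apply: eq_card => t; rewrite !inE /= big_cons /= (path_sortedE gt_trans) e_n /=.
  have -> : forall s, (x * 3 ^ e + s == m) = (s == m - x * 3 ^ e).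
    by move=> s; apply/eqP/eqP => [<-|->]; [rewrite addKn | rewrite subnKC].
  case lt_e: (all (fun y : 'I_N => y < e) t); rewrite /= ?andbF //.
  have -> : all (fun e0 : 'I_N => e0 < n) t.
    by apply/allP => u /(allP lt_e) u_e; apply: ltn_trans e_n.
  by case: (sorted _ _); case: (_ == _).
rewrite big_mkord (big_ord_widen N (fun e =>
    (x * 3 ^ e <= m) * ndec a 0 e (m - x * 3 ^ e)) le_nN) big_mkcond [RHS]big_mkcond.
by apply: eq_bigr => i _; case: (i < n); rewrite ?mul1n ?mul0n.
Qed.

Lemma Hcoef_ndec a m : Hcoef a m = ndec a 0 m.+1 m.
Proof.
rewrite /Hcoef -(card_dec_tuples a m (leqnn _)); apply: eq_card => t; rewrite !inE.
suff -> : all (fun e : 'I_m.+1 => (e < m.+1)%N) t by rewrite andbT.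
by apply/allP => u _; apply: ltn_ord.
Qed.

Definition good (a : seq nat) : bool := all (fun x => (0 < x) && ~~ (3 %| x)) a.

Lemma good_pos a : good a -> all (fun x => 0 < x) a.
Proof. by move/allP=> a_good; apply/allP => x /a_good /andP []. Qed.

Lemma good_rcons a x : good (rcons a x) = [&& good a, 0 < x & ~~ (3 %| x)].
Proof. by rewrite /good all_rcons andbC. Qed.

Definition lastn (a : seq nat) : nat := last 0 a.
Definition front (a : seq nat) : seq nat := take (size a).-1 a.

Lemma lastn_rcons a x : lastn (rcons a x) = x.
Proof. by rewrite /lastn last_rcons. Qed.

Lemma front_rcons a x : front (rcons a x) = a.
Proof. by rewrite /front size_rcons -cats1 take_size_cat. Qed.

Lemma size_front a : size (front a) = (size a).-1.
Proof. by rewrite /front size_take; case: (size a) => //= n; rewrite ltnSn. Qed.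

Lemma good_front a : good a -> good (front a).
Proof.
by case/lastP: a => // a x; rewrite front_rcons good_rcons => /andP [].
Qed.

Lemma Hcoef_nil m : Hcoef [::] m = (m == 0).
Proof. by rewrite Hcoef_ndec. Qed.

(* A representation of 3m by a good tuple has its last exponent positive, so
   dividing every power by 3 is a bijection: the coefficients of H_a at m and
   3m agree. *)
Lemma Hcoef_mul3 a m : good a -> Hcoef a (3 * m) = Hcoef a m.
Proof.
case/lastP: a => [|a x]; first by rewrite !Hcoef_nil muln_eq0.
rewrite good_rcons => /and3P [a_good x_pos x_ndvd]; case: m => [|m] //.
rewrite !Hcoef_ndec ndec_rcons /= expn0 muln1 mul1n.
have -> : (x <= 3 * m.+1) * ndec a 1 (3 * m.+1).+1 (3 * m.+1 - x) = 0.
  case: leqP => le_x; last by rewrite mul0n.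
  rewrite ndec_ndvd3 ?muln0 //; apply: contra x_ndvd => dvd_rest.
  by rewrite -(subKn le_x) dvdn_sub // dvdn_mulr.
rewrite addn0 ndec_shift ndec_cut //; last by lia.
by apply: good_pos; rewrite good_rcons a_good x_pos.
Qed.

(* At m = 3u + s with 3 not dividing s, the last exponent must be 0, which
   forces x = s (mod 3) and leaves a representation of u - x/3 by the front. *)
Lemma Hcoef_mul3D a x u s : 0 < s < 3 -> good (rcons a x) ->
  Hcoef (rcons a x) (3 * u + s) =
  ((x %% 3 == s) && (x %/ 3 <= u)) * Hcoef a (u - x %/ 3).
Proof.
move=> /andP [s_pos s_lt3]; rewrite good_rcons => /and3P [a_good x_pos x_ndvd].
have ndvd_m : ~~ (3 %| 3 * u + s).
  by rewrite dvdn_addr ?dvdn_mulr //; case: s s_pos s_lt3 => [|[|[|]]].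
rewrite !Hcoef_ndec ndec_rcons ndec_ndvd3 // add0n /= expn0 muln1.
case: leqP => le_x; last first.
  rewrite mul0n; case: eqP => //= x_mod; rewrite leqNgt.
  by have -> : u < x %/ 3 by lia.
rewrite mul1n; case: eqP => x_mod /=; last first.
  by rewrite ndec_ndvd3 ?muln0 //; apply/negP => dvd_rest; apply: x_mod; lia.
have -> : x %/ 3 <= u by lia.
have -> : 3 * u + s - x = 3 * (u - x %/ 3) by lia.
by rewrite ndec_shift ndec_cut //; [apply: good_pos | lia].
Qed.

Definition Gcoef (a : seq nat) (j m : nat) : nat :=
  if j <= m then Hcoef a (m - j) else 0.

(* H of the empty tuple is 1, so z^j H_() is the monomial z^j. *)
Lemma Gcoef_nil i m : Gcoef [::] i m = (i == m).
Proof.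
rewrite /Gcoef Hcoef_nil; case: leqP => cmp; first by rewrite subn_eq0 eqn_leq cmp.
by rewrite gtn_eqF.
Qed.

(* For the 3-section at residue k < 3: 3m + k >= j iff m >= sec_idx k j, and
   then 3m + k - j = 3 (m - sec_idx k j) + sec_rem k j. *)
Definition sec_idx (k j : nat) : nat := j %/ 3 + (k < j %% 3).
Definition sec_rem (k j : nat) : nat := (k + 3 - j %% 3) %% 3.

Lemma sec_idx_le k j m : k < 3 -> (j <= 3 * m + k) = (sec_idx k j <= m).
Proof. by move=> k_lt3; rewrite /sec_idx; case: ltnP => cmp; apply/idP/idP; lia. Qed.

Lemma sec_idx_sub k j m : k < 3 -> sec_idx k j <= m ->
  3 * m + k - j = 3 * (m - sec_idx k j) + sec_rem k j.
Proof. by move=> k_lt3; rewrite /sec_idx /sec_rem; case: ltnP => cmp; lia. Qed.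

Lemma sec_rem_eq0 k j : k < 3 -> (sec_rem k j == 0) = (j %% 3 == k).
Proof. by rewrite /sec_rem => k_lt3; apply/eqP/eqP; lia. Qed.

Lemma Gcoef_section a j k m : k < 3 -> good a ->
  Gcoef a j (3 * m + k) =
  if sec_rem k j == 0 then Gcoef a (sec_idx k j) m
  else (lastn a %% 3 == sec_rem k j) *
       Gcoef (front a) (sec_idx k j + lastn a %/ 3) m.
Proof.
move=> k_lt3 a_good; rewrite /Gcoef sec_idx_le //.
have rem_lt3 : sec_rem k j < 3 by rewrite /sec_rem ltn_mod.
case: leqP => [le_idx|lt_idx]; last first.
  case: eqP => // _; suff -> : sec_idx k j + lastn a %/ 3 <= m = false by rewrite muln0.
  by apply/negbTE; rewrite -ltnNge ltn_addr.
rewrite sec_idx_sub //; case: eqP => [->|rem_neq0]; first by rewrite addn0 Hcoef_mul3.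
move/eqP/negbTE: rem_neq0 => rem_neq0.
case/lastP: a a_good => [|a x] a_good.
  by rewrite Hcoef_nil /lastn /= mod0n [0 == _]eq_sym rem_neq0 addn_eq0 rem_neq0 andbF.
rewrite Hcoef_mul3D // ?lastn_rcons ?front_rcons; last by rewrite lt0n rem_neq0 rem_lt3.
case: eqP => //= _; case: leqP => le_xm.
  have -> : sec_idx k j + x %/ 3 <= m by lia.
  by rewrite subnDA.
have -> : sec_idx k j + x %/ 3 <= m = false by lia.
by rewrite mul0n muln0.
Qed.

Section Atoms.
Variable R : nzRingType.
Local Open Scope ring_scope.

(* An atom (a, j, c) stands for the series c z^j H_a; a list of atoms stands
   for their sum. Its key (a, j) identifies the basis series. *)
Definition atom : Type := (seq nat * nat * R)%type.

Definition series (L : seq atom) (m : nat) : R :=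
  \sum_(t <- L) t.2 * (Gcoef t.1.1 t.1.2 m)%:R.

Definition vanishes (L : seq atom) : Prop := forall m, series L m = 0.

Definition weight (L : seq atom) (key : seq nat * nat) : R :=
  \sum_(t <- L | t.1 == key) t.2.

Lemma weightE L key : weight L key = \sum_(t <- L) (if t.1 == key then t.2 else 0).
Proof. by rewrite /weight big_mkcond. Qed.

Definition bounded (r : nat) (L : seq atom) : bool :=
  all (fun t => good t.1.1 && (size t.1.1 <= r)%N) L.

(* The 3-section at residue k acting on one atom, following Gcoef_section. *)
Definition sec_atom (k : nat) (t : atom) : atom :=
  let: (a, j, c) := t in
  if sec_rem k j == 0%N then (a, sec_idx k j, c)
  else if (lastn a %% 3 == sec_rem k j)%N then (front a, (sec_idx k j + lastn a %/ 3)%N, c)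
  else ([::], 0%N, 0).
(* Simplification must not unfold sections, so that the lemmas below apply. *)
Arguments sec_atom : simpl never.

Definition sec (k : nat) (L : seq atom) : seq atom := map (sec_atom k) L.

Lemma sec_atom_keep k a j c :
  sec_rem k j = 0%N -> sec_atom k (a, j, c) = (a, sec_idx k j, c).
Proof. by rewrite /sec_atom => ->. Qed.

Lemma sec_atom_drop k a j c : sec_rem k j != 0%N ->
  sec_atom k (a, j, c) = ([::], 0%N, 0) \/ (size (sec_atom k (a, j, c)).1.1 < size a)%N.
Proof.
rewrite /sec_atom => /negbTE rem_neq0; rewrite rem_neq0; case: eqP => [last_eq|_]; last by left.
case/lastP: a last_eq => [|a x] last_eq; first by move: rem_neq0; rewrite -last_eq.
by right; rewrite /= front_rcons size_rcons.
Qed.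

Lemma series_sec_atom k t m : (k < 3)%N -> good t.1.1 ->
  (sec_atom k t).2 * (Gcoef (sec_atom k t).1.1 (sec_atom k t).1.2 m)%:R =
  t.2 * (Gcoef t.1.1 t.1.2 (3 * m + k))%:R.
Proof.
case: t => [[a j] c] /= k_lt3 a_good; rewrite Gcoef_section // /sec_atom.
case: eqP => //= _; case: eqP => /= _; first by rewrite mul1n.
by rewrite mul0r mul0n mulr0.
Qed.

Lemma sec_atom_good k t : good t.1.1 ->
  good (sec_atom k t).1.1 && (size (sec_atom k t).1.1 <= size t.1.1)%N.
Proof.
case: t => [[a j] c] a_good; case: (eqVneq (sec_rem k j) 0%N) => [rem0|rem_neq0].
  by rewrite sec_atom_keep //= a_good leqnn.
rewrite /sec_atom (negbTE rem_neq0); case: eqP => _ //=.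
by rewrite good_front // size_front leq_pred.
Qed.

Lemma bounded_sec r k L : bounded r L -> bounded r (sec k L).
Proof.
rewrite /bounded /sec all_map => /allP L_ok; apply/allP => t /L_ok /andP [t_good t_size] /=.
by case/andP: (sec_atom_good k t_good) => -> /= /leq_trans; apply.
Qed.

Lemma series_sec r k L m : (k < 3)%N -> bounded r L ->
  series (sec k L) m = series L (3 * m + k).
Proof.
move=> k_lt3 /allP L_ok; rewrite /series /sec big_map; apply: eq_big_seq => t t_in.
by apply: series_sec_atom => //; case/andP: (L_ok t t_in).
Qed.

Lemma vanishes_sec r k L : (k < 3)%N -> bounded r L -> vanishes L -> vanishes (sec k L).
Proof. by move=> k_lt3 L_ok L0 m; rewrite (series_sec m k_lt3 L_ok) L0. Qed.

Lemma weight_sec_top r k L b i : (k < 3)%N -> bounded r L -> size b = r ->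
  weight (sec k L) (b, i) = weight L (b, 3 * i + k)%N.
Proof.
move=> k_lt3 /allP L_ok size_b; rewrite /sec weightE big_map weightE.
apply: eq_big_seq => -[[a j] c] t_in.
have size_a : (size a <= r)%N by case/andP: (L_ok _ t_in).
case: (eqVneq (sec_rem k j) 0%N) => [rem0|rem_neq0].
  rewrite sec_atom_keep //= !xpair_eqE; move: rem0 => /eqP; rewrite sec_rem_eq0 // => /eqP j_mod.
  by have -> : (sec_idx k j == i) = (j == 3 * i + k)%N by rewrite /sec_idx; apply/eqP/eqP; lia.
have j_neq : (j == 3 * i + k)%N = false.
  by apply/negbTE; apply: contra rem_neq0 => /eqP ->; rewrite sec_rem_eq0 //; apply/eqP; lia.
rewrite xpair_eqE j_neq andbF.
case: (sec_atom_drop a c rem_neq0) => [-> | shorter]; first by case: ifP.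
case: eqP => // key_eq; by move: shorter; rewrite key_eq /= size_b ltnNge size_a.
Qed.

Lemma bounded_iter r k n L : bounded r L -> bounded r (iter n (sec k) L).
Proof. by move=> L_ok; elim: n => //= n; apply: bounded_sec. Qed.

Lemma vanishes_iter r k n L : (k < 3)%N -> bounded r L -> vanishes L ->
  vanishes (iter n (sec k) L).
Proof.
move=> k_lt3 L_ok L0; elim: n => //= n.
exact: vanishes_sec k_lt3 (bounded_iter k n L_ok).
Qed.

Lemma weight_iter_top r n L b : bounded r L -> size b = r ->
  weight (iter n (sec 0) L) (b, 0%N) = weight L (b, 0%N).
Proof.
move=> L_ok size_b; elim: n => //= n IH.
by rewrite (weight_sec_top 0 _ (bounded_iter 0 n L_ok) size_b).
Qed.

Definition flat (s : nat) (L : seq atom) : bool :=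
  all (fun t => (s <= size t.1.1)%N ==> (t.1.2 == 0%N)) L.

Lemma sec0_atom_flat s d t :
  ((s < size t.1.1) ==> (t.1.2 == 0))%N -> ((size t.1.1 == s) ==> (t.1.2 <= d))%N ->
  ((s < size (sec_atom 0 t).1.1) ==> ((sec_atom 0 t).1.2 == 0))%N &&
  ((size (sec_atom 0 t).1.1 == s) ==> ((sec_atom 0 t).1.2 <= d.-1))%N.
Proof.
case: t => [[a j] c] hi cur; rewrite /= in hi cur.
case: (eqVneq (sec_rem 0 j) 0%N) => [rem0|rem_neq0].
  have /eqP j_mod : (j %% 3 == 0)%N by rewrite -sec_rem_eq0 ?rem0.
  rewrite sec_atom_keep //= /sec_idx j_mod addn0.
  by apply/andP; split; apply/implyP => size_a;
    [move/implyP: hi | move/implyP: cur] => /(_ size_a); lia.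
have size_a : (size a <= s)%N.
  rewrite leqNgt; apply: contra rem_neq0 => /(implyP hi) /eqP ->.
  by rewrite sec_rem_eq0.
case: (sec_atom_drop a c rem_neq0) => [->|shorter]; first by rewrite /= leq0n !implybT.
have lt_s := leq_trans shorter size_a.
apply/andP; split; apply/implyP; [move=> gt_s | move/eqP=> eq_s].
  by have := ltn_trans lt_s gt_s; rewrite ltnn.
by move: lt_s; rewrite eq_s ltnn.
Qed.

(* Iterating the section at residue 0 eventually makes the atoms of length s
   unshifted too: their shifts j become j / 3 or the atoms get shorter. *)
Lemma flat_sec0 s L : flat s.+1 L -> exists n, flat s (iter n (sec 0) L).
Proof.
move=> L_flat; set d := (\sum_(t <- L) t.1.2)%N.
have inv n : flat s.+1 (iter n (sec 0) L) &&
    all (fun t => (size t.1.1 == s) ==> (t.1.2 <= d - n))%N (iter n (sec 0) L).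
  elim: n => [|n /andP [hi cur]] /=.
    rewrite L_flat; apply/allP => t t_in; apply/implyP => _.
    by rewrite subn0 /d (big_rem _ t_in) leq_addr.
  rewrite /flat /sec !all_map -all_predI; apply/allP => t t_in /=.
  by rewrite subnS; apply: sec0_atom_flat; [apply: (allP hi) | apply: (allP cur)].
exists d; case/andP: (inv d) => /allP hi /allP cur.
apply/allP => t t_in; apply/implyP; rewrite leq_eqVlt => /orP [/eqP size_t|longer].
  by move/implyP: (cur t t_in); rewrite size_t subnn leqn0; apply.
exact: (implyP (hi t t_in)).
Qed.

Lemma bounded_sec_drop r k L : (0 < k < 3)%N -> bounded r.+1 L -> flat r L ->
  bounded r (sec k L).
Proof.
move=> /andP [k_pos k_lt3] /allP L_ok /allP L_flat.
rewrite /bounded /sec all_map; apply/allP => -[[a j] c] t_in /=.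
case/andP: (L_ok _ t_in) => /= a_good size_a.
case/andP: (sec_atom_good k (t := (a, j, c)) a_good) => -> /= shrink.
case: (eqVneq (sec_rem k j) 0%N) => [rem0|rem_neq0].
  rewrite (leq_trans shrink) // leqNgt; apply/negP => /ltnW /(implyP (L_flat _ t_in)) /= /eqP j0.
  by move: rem0 => /eqP; rewrite sec_rem_eq0 // /= j0 mod0n => /eqP k0; move: k_pos; rewrite -k0.
case: (sec_atom_drop a c rem_neq0) => [-> //|shorter].
by rewrite -ltnS (leq_trans shorter).
Qed.

Lemma weight_sec_strip r k L b x : (0 < k < 3)%N -> (x %% 3 = k)%N -> size b = r ->
  bounded r.+1 L -> flat r L ->
  weight (sec k L) (b, x %/ 3)%N = weight L (rcons b x, 0%N).
Proof.
move=> /andP [k_pos k_lt3] x_mod size_b /allP L_ok /allP L_flat.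
rewrite /sec weightE big_map weightE; apply: eq_big_seq => -[[a j] c] t_in.
case/andP: (L_ok _ t_in) => /= a_good size_a.
case: (ltnP (size a) r) => [short_a|long_a].
  have -> : (a, j) == (rcons b x, 0%N) = false.
    by rewrite xpair_eqE; apply/negbTE/nandP; left; apply: contraTneq short_a => ->;
       rewrite size_rcons size_b -leqNgt.
  case: eqP => // key_eq; case/andP: (sec_atom_good k (t := (a, j, c)) a_good).
  by rewrite key_eq /= size_b => _ /(leq_trans short_a); rewrite ltnn.
have j0 : j = 0%N by apply/eqP; apply: (implyP (L_flat _ t_in)).
have rem_k : sec_rem k j = k by rewrite j0 /sec_rem mod0n subn0 -{2}(modn_small k_lt3) modnDr.
have k_neq0 : (k == 0%N) = false by apply/eqP => k0; rewrite k0 in k_pos.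
rewrite /sec_atom rem_k k_neq0.
rewrite j0 /sec_idx mod0n div0n ltn0 /= add0n.
case/lastP: a a_good size_a long_a t_in => [|a y] _ _ _ _.
  rewrite /lastn /= mod0n [0%N == k]eq_sym k_neq0 /= if_same.
  by case: (b) => [|? ?].
rewrite lastn_rcons front_rcons add0n.
case: (eqVneq (y %% 3)%N k) => [y_mod|y_mod] /=; rewrite !xpair_eqE eqseq_rcons andbT.
  have -> : (y %/ 3 == x %/ 3)%N = (y == x).
    by apply/eqP/eqP => [y_div|-> //]; rewrite (divn_eq y 3) (divn_eq x 3) y_div y_mod x_mod.
  by [].
have -> : (y == x) = false by apply/negbTE; apply: contra_neq y_mod => ->.
by rewrite andbF; case: ifP.
Qed.

Definition weights_vanish (r : nat) : Prop :=
  forall L, bounded r L -> vanishes L -> forall key, weight L key = 0.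

(* Unshifted atoms of maximal length r + 1: flatten lengths >= r by
   residue-0 sections, then strip the last entry and use the hypothesis. *)
Lemma weight_top_unshifted r L b : weights_vanish r -> bounded r.+1 L -> vanishes L ->
  size b = r.+1 -> good b -> weight L (b, 0%N) = 0.
Proof.
move=> IH L_ok L0 size_b b_good.
have L_flat : flat r.+2 L.
  by apply/allP => t /(allP L_ok) /andP [_ size_t]; rewrite leqNgt ltnS size_t.
have [n1 flat1] := flat_sec0 L_flat.
have [n2 flat2] := flat_sec0 flat1.
set L1 := iter n1 (sec 0) L; set L2 := iter n2 (sec 0) L1.
have L1_ok : bounded r.+1 L1 := bounded_iter 0 n1 L_ok.
have L2_ok : bounded r.+1 L2 := bounded_iter 0 n2 L1_ok.
have L2_0 : vanishes L2.
  have lt03 : (0 < 3)%N by [].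
  exact (vanishes_iter n2 lt03 L1_ok (vanishes_iter n1 lt03 L_ok L0)).
rewrite -(weight_iter_top n1 L_ok size_b) -/L1 -(weight_iter_top n2 L1_ok size_b) -/L2.
case/lastP: b size_b b_good => [//|b x]; rewrite size_rcons => -[size_b].
rewrite good_rcons => /and3P [_ x_pos x_ndvd].
have k_range : (0 < x %% 3 < 3)%N by rewrite ltn_mod andbT lt0n.
rewrite -(weight_sec_strip k_range erefl size_b L2_ok flat2).
apply: IH; first exact: bounded_sec_drop.
by apply: vanishes_sec L2_ok L2_0; case/andP: k_range.
Qed.

(* Shifted atoms of maximal length reduce to smaller shifts through the
   section at residue j mod 3. *)
Lemma weight_top r L b j : weights_vanish r -> bounded r.+1 L -> vanishes L ->
  size b = r.+1 -> good b -> weight L (b, j) = 0.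
Proof.
move=> IH; elim/ltn_ind: j L => -[|j] IHj L L_ok L0 size_b b_good.
  exact: weight_top_unshifted IH L_ok L0 size_b b_good.
have k_lt3 : (j.+1 %% 3 < 3)%N by rewrite ltn_mod.
rewrite (divn_eq j.+1 3) mulnC -(weight_sec_top _ k_lt3 L_ok size_b).
apply: IHj; [lia | exact: bounded_sec | exact: vanishes_sec L_ok L0 | by [] | by []].
Qed.

Lemma weight_absent L key : (forall t, t \in L -> t.1 != key) -> weight L key = 0.
Proof.
move=> no_key; rewrite /weight big1_seq // => t /andP [/eqP t_key /no_key].
by rewrite t_key eqxx.
Qed.

Lemma series_of_weights L : (forall key, weight L key = 0) -> vanishes L.
Proof.
move=> L_w0 m; rewrite /series.
transitivity (\sum_(key <- undup (map fst L)) weight L key * (Gcoef key.1 key.2 m)%:R).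
  under [RHS]eq_bigr do rewrite weightE big_distrl /=.
  rewrite exchange_big /=; apply: eq_big_seq => t t_in.
  rewrite (bigD1_seq t.1) ?undup_uniq ?mem_undup ?map_f //= eqxx.
  by rewrite big1 ?addr0 // => key /negbTE key_neq; rewrite eq_sym key_neq mul0r.
by rewrite big1 // => key _; rewrite L_w0 mul0r.
Qed.

Lemma series_filter (P : pred atom) L m :
  series L m = series (filter P L) m + series (filter (predC P) L) m.
Proof. by rewrite /series !big_filter (bigID P). Qed.

Lemma weight_filter (P : pred atom) L key :
  weight L key = weight (filter P L) key + weight (filter (predC P) L) key.
Proof.
rewrite /weight !big_filter_cond (bigID P) /=.
by congr (_ + _); apply: eq_bigl => t; rewrite andbC.
Qed.

(* Length 0: the series is a polynomial whose coefficients are the weights. *)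
Lemma weights_vanish0 : weights_vanish 0.
Proof.
move=> L L_ok L0 [a j].
have nil_t t : t \in L -> t.1.1 = [::].
  by move=> /(allP L_ok) /andP [_]; rewrite leqn0 => /nilP.
case: a => [|y a]; last by apply: weight_absent => -[[b i] c] /nil_t /= ->.
rewrite -(L0 j) weightE /series; apply: eq_big_seq => -[[b i] c] /nil_t /= ->.
by rewrite Gcoef_nil xpair_eqE eqxx /=; case: eqP => _; rewrite ?mulr1 ?mulr0.
Qed.

(* Length r + 1: the longest atoms have zero weight by weight_top; removing
   them leaves a vanishing list of length r. *)
Lemma weights_vanish_step r : weights_vanish r -> weights_vanish r.+1.
Proof.
move=> IH L L_ok L0; set P := fun t : atom => (size t.1.1 <= r)%N.
have low_ok : bounded r (filter P L).
  by apply/allP => t; rewrite mem_filter => /andP [t_low /(allP L_ok) /andP [-> _]].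
have high_size t : t \in filter (predC P) L -> size t.1.1 = r.+1.
  rewrite mem_filter => /andP [t_high /(allP L_ok) /andP [_ t_size]].
  by apply/eqP; rewrite eqn_leq t_size ltnNge.
have high_w0 key : weight (filter (predC P) L) key = 0.
  case: key => b i; have [size_b|size_b] := eqVneq (size b) r.+1; last first.
    apply: weight_absent => t /high_size t_size; apply: contra_neq size_b => t_eq.
    by rewrite -t_size t_eq.
  have [b_good|b_bad] := boolP (good b); last first.
    apply: weight_absent => t; rewrite mem_filter => /andP [_ /(allP L_ok) /andP [t_good _]].
    by apply: contraNneq b_bad => t_eq; move: t_good; rewrite t_eq.
  have low_w0 : weight (filter P L) (b, i) = 0.
    apply: weight_absent => t; rewrite mem_filter => /andP [t_low _].
    by apply/eqP => t_eq; move: t_low; rewrite /P t_eq /= size_b ltnn.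
  by have := weight_top i IH L_ok L0 size_b b_good; rewrite (weight_filter P) low_w0 add0r.
have low_0 : vanishes (filter P L).
  by move=> m; have := L0 m; rewrite (series_filter P) (series_of_weights high_w0 m) addr0.
by move=> key; rewrite (weight_filter P) high_w0 (IH _ low_ok low_0) addr0.
Qed.

Lemma weights_vanish_all r : weights_vanish r.
Proof. by elim: r => [|r IH]; [exact: weights_vanish0 | exact: weights_vanish_step]. Qed.

Definition atoms (a : seq nat) (q : {poly R}) : seq atom :=
  [seq (a, j, q`_j) | j <- iota 0 (size q)].

Lemma bounded_atoms r a q : good a -> (size a <= r)%N -> bounded r (atoms a q).
Proof.
by move=> a_good size_a; rewrite /bounded all_map; apply/allP => j _ /=; rewrite a_good.
Qed.

Lemma sum_widen (F : nat -> R) n M : (n <= M)%N -> (forall j, (n <= j)%N -> F j = 0) ->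
  \sum_(j < n) F j = \sum_(j < M) F j.
Proof.
move=> le_nM F0; rewrite (big_ord_widen _ _ le_nM) big_mkcond /=.
by apply: eq_bigr => j _; case: ltnP => // /F0.
Qed.

Lemma series_atoms a q m : series (atoms a q) m = mulps q (Hser R a) m.
Proof.
set F := fun j => q`_j * (Gcoef a j m)%:R; set M := maxn (size q) m.+1.
rewrite /series /atoms big_map.
have -> : iota 0 (size q) = index_iota 0 (size q) by rewrite /index_iota subn0.
rewrite big_mkord.
rewrite (@sum_widen F _ M) ?leq_maxl //; last by move=> j le_qj; rewrite /F nth_default ?mul0r.
rewrite /mulps (eq_bigr (fun j : 'I_m.+1 => F j)) => [|j _]; last first.
  by rewrite /F /Hser /Gcoef -ltnS ltn_ord.
by rewrite (@sum_widen F _ M) ?leq_maxr // => j lt_mj; rewrite /F /Gcoef leqNgt lt_mj mulr0.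
Qed.

Lemma mulps_nil q m : mulps q (Hser R [::]) m = q`_m.
Proof.
rewrite /mulps big_ord_recr /= subnn /Hser Hcoef_nil mulr1 big1 ?add0r // => j _.
by rewrite Hcoef_nil subn_eq0 leqNgt ltn_ord mulr0.
Qed.

Lemma weight_atoms a q b j : weight (atoms a q) (b, j) = if a == b then q`_j else 0.
Proof.
rewrite /weight /atoms big_map; case: eqP => [<-|neq_ab]; last first.
  by rewrite big1 // => i; rewrite xpair_eqE => /andP [/eqP].
under eq_bigl do rewrite xpair_eqE eqxx /=.
case: (ltnP j (size q)) => [lt_jq|le_qj].
  by rewrite -big_filter filter_pred1_uniq ?iota_uniq ?mem_iota //= big_seq1.
rewrite nth_default // big1_seq // => i /andP [/eqP -> ].
by rewrite mem_iota add0n ltnNge le_qj.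
Qed.

Definition combination N (A : 'I_N -> seq nat) (p0 : {poly R}) (p : 'I_N -> {poly R}) :
    seq atom :=
  atoms [::] p0 ++ flatten [seq atoms (A i) (p i) | i <- index_enum 'I_N].

Lemma series_combination N A p0 p m :
  series (@combination N A p0 p) m = p0`_m + \sum_(i < N) mulps (p i) (Hser R (A i)) m.
Proof.
rewrite /series big_cat big_flatten big_map -/(series _ m) series_atoms mulps_nil.
by congr (_ + _); apply: eq_bigr => i _; rewrite -series_atoms.
Qed.

Lemma weight_combination N A p0 p b j :
  weight (@combination N A p0 p) (b, j) =
  (if [::] == b then p0`_j else 0) + \sum_(i < N) (if A i == b then (p i)`_j else 0).
Proof.
rewrite /weight big_cat big_flatten big_map -/(weight _ _) weight_atoms.
by congr (_ + _); apply: eq_bigr => i _; rewrite -weight_atoms.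
Qed.

Theorem H_lin_indep_all : H_lin_indep R.
Proof.
move=> N A p0 p A_adm A_inj rel.
have A_nil i : A i != [::] by case/andP: (A_adm i); case: (A i).
set r := (\max_(i < N) size (A i))%N.
have L_ok : bounded r (combination A p0 p).
  rewrite /combination /bounded all_cat; apply/andP; split; first exact: bounded_atoms.
  apply/allP => t /flatten_mapP [i _ t_in].
  have Ai_ok : bounded r (atoms (A i) (p i)).
    by apply: bounded_atoms; [case/andP: (A_adm i) | exact: leq_bigmax].
  exact: (allP Ai_ok).
have L0 : vanishes (combination A p0 p) by move=> m; rewrite series_combination.
have w0 := weights_vanish_all L_ok L0.
split.
  apply/polyP => j; have := w0 ([::], j); rewrite weight_combination eqxx coef0.
  by rewrite big1 ?addr0 // => i _; rewrite (negbTE (A_nil i)).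
move=> i; apply/polyP => j; have := w0 (A i, j); rewrite weight_combination coef0.
rewrite eq_sym (negbTE (A_nil i)) add0r (bigD1 i) //= eqxx big1 ?addr0 // => k k_neq.
by case: eqP => // /A_inj eq_ki; rewrite eq_ki eqxx in k_neq.
Qed.
End Atoms.

Theorem corollary2p3 :
  H_lin_indep 'Z_3 /\
  (forall gamma : nat, (0 < gamma)%N -> H_lin_indep 'Z_(3 ^ gamma)) /\
  H_lin_indep int.
Proof.
split; first exact: H_lin_indep_all.
by split=> [gamma _|]; exact: H_lin_indep_all.
Qed.
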